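(* Let $n,m,k\ge1$, $C:\{0,1\}^n\to\{0,1\}^m$, $V:\{0,1\}^m\times\{0,1\}^\ell\to\{0,1\}$, $\varepsilon\in(0,1/25]$, $\alpha>1$, $p_H,p_{UH}\in[0,1]$ with $p_H\in[g_H\pm\frac45\sqrt\varepsilon]$ and $p_{UH}\in[g_{UH}\pm10\sqrt\varepsilon]$. Let $y_1,\dots,y_k\in\{0,1\}^m$ be arbitrary, $u:[k]\to\mathbb{Z}_{\ge0}\cup\{\infty\}$, $\mathcal{Y}\subseteq[k]$ and $w_i\in\{0,1\}^\ell$ ($i\in\mathcal{Y}$); let $\mathcal{L}=\{i\in[k]:2^{-(u(i)+1)\varepsilon}<\alpha2^{-m}\}$ and $\mathcal{H}=[k]\setminus\mathcal{L}$. Assume: (a) $|\mathcal{Y}|/k\in[g_{UY}\pm\varepsilon]$; (b) $V(y_i,w_i)=1$ for all $i\in\mathcal{Y}$; (c) $|\mathcal{H}|/k\in[p_{UH}\pm3\sqrt\varepsilon]$; (d) $\frac1k\sum_{i\in\mathcal{L}}2^m2^{-u(i)\varepsilon}\in[1-p_H\pm5\sqrt\varepsilon]$; (1) $\Pr_{y\leftarrow\mathcal{D}^C}[\mathcal{D}^C(y)\in(1\pm4\varepsilon)\alpha2^{-m}]\le\sqrt\varepsilon$; (2) for all $i$: $u'(i)=\infty\Rightarrow u(i)=\infty$; (3) for all $i$: $u(i)=\infty$ or $\mathcal{D}^C(y_i)>(1-\varepsilon/2)2^{-(u(i)+1)\varepsilon}$; (4) $\frac1k|\{i:y_i\in\mathcal{M}\}|<3\sqrt\varepsilon/\alpha$;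 (5) $|\mathcal{Y}'|/k\in[g_{UY}\pm\varepsilon]$; (6) $|\mathcal{H}'|/k\in[g_{UH}\pm3\sqrt\varepsilon]$; (7) $\frac1k\sum_{i\in\mathcal{L}'}2^m2^{-u'(i)\varepsilon}\in[1-g_H\pm5\sqrt\varepsilon]$; (8) $\frac1k\sum_{i\in\mathcal{L}'\cap\mathcal{Y}'}2^m2^{-u'(i)\varepsilon}\in[g_{YL}\pm5\sqrt\varepsilon]$. Then $\frac1k\sum_{i\in\mathcal{L}\cap\mathcal{Y}}2^m2^{-u(i)\varepsilon}\in[g_{YL}\pm112\sqrt\varepsilon\,\alpha]$.
   Context: $\mathcal{D}^C(y)=\Pr_{r\leftarrow\{0,1\}^n}[C(r)=y]$ for uniform $r$. For $y\in\{0,1\}^m$ write $y\in V$ if there is $w$ with $V(y,w)=1$. Let $t=\lceil n/\varepsilon\rceil$, $\mathcal{B}_j=\{y:\mathcal{D}^C(y)\in(2^{-(j+1)\varepsilon},2^{-j\varepsilon}]\}$ for $j\in\{0,\dots,t\}$, and $u'(y)=j$ if $y\in\mathcal{B}_j$, $u'(y)=\infty$ otherwise; conventions $2^{-\infty\varepsilon}=0$, $j<\infty$, $\infty+j=\infty$. $g_H=\Pr_{y\leftarrow\mathcal{D}^C}[\mathcal{D}^C(y)\ge\alpha2^{-m}]$, $g_{UH}=\Pr_{y\text{ uniform}}[\mathcal{D}^C(y)\ge\alpha2^{-m}]$, $g_{UY}=\Pr_{y\text{ uniform}}[y\in V]$, $g_{YL}=\Pr_{y\leftarrow\mathcal{D}^C}[\mathcal{D}^C(y)<\alpha2^{-m}\wedge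 y\in V]$. For the given $y_1,\dots,y_k$: $u'(i):=u'(y_i)$, $\mathcal{Y}'=\{i:y_i\in V\}$, $\mathcal{L}'=\{i:2^{-(u'(i)+1)\varepsilon}<\alpha2^{-m}\}$, $\mathcal{H}'=[k]\setminus\mathcal{L}'$, $\mathcal{M}=\{y:\mathcal{D}^C(y)\in(1\pm4\varepsilon)\alpha2^{-m}\}$. $[a\pm b]=[a-b,a+b]$, $(1\pm\delta)x=[(1-\delta)x,(1+\delta)x]$, $[k]=\{1,\dots,k\}$. *)

From Stdlib Require Import Reals.
From mathcomp Require Import all_boot.
Set Implicit Arguments. Unset Strict Implicit. Unset Printing Implicit Defensive.

Local Open Scope R_scope.

Notation bits n := (n.-tuple bool).

Definition Rltb (x y : R) : bool := if Rlt_dec x y then true else false.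
Definition Rleb (x y : R) : bool := if Rle_dec x y then true else false.

Definition in_pm (x a b : R) : Prop := a - b <= x <= a + b.

Definition DC (n m : nat) (C : bits n -> bits m) (y : bits m) : R :=
  INR #|[pred r : bits n | C r == y]| / 2 ^ n.

(* values in Z_{>=0} ∪ {∞}: None = ∞.  ex2 eps o s = 2^{-(o+s) eps}, with 2^{-∞ eps}=0 *)
Definition ex2 (eps : R) (o : option nat) (s : nat) : R :=
  match o with Some j => Rpower 2 (- INR (j + s) * eps) | None => 0 end.

(* t = ceil(n / eps) *)
Definition tpar (n : nat) (eps : R) : nat :=
  Z.to_nat (- Int_part (- (INR n / eps))).

Definition inBin (n m : nat) (C : bits n -> bits m) (eps : R) (j : nat) (y : bits m) : bool :=
  Rltb (Rpower 2 (- INR (j + 1) * eps)) (DC C y) && Rleb (DC C y) (Rpower 2 (- INR j * eps)).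

(* u'(y): the j in {0..t} with y ∈ B_j (bins are disjoint), else ∞ *)
Definition uprime (n m : nat) (C : bits n -> bits m) (eps : R) (y : bits m) : option nat :=
  let s := [seq j <- iota 0 (tpar n eps).+1 | inBin C eps j y] in
  match s with j :: _ => Some j | [::] => None end.

Definition inV (m l : nat) (V : bits m -> bits l -> bool) (y : bits m) : bool :=
  [exists w : bits l, V y w].

(* g_H = Pr_{y <- D^C}[D^C(y) >= alpha 2^-m] *)
Definition gH (n m : nat) (C : bits n -> bits m) (alpha : R) : R :=
  (\big[Rplus/0]_(r : bits n) (if Rleb (alpha / 2 ^ m) (DC C (C r)) then 1 else 0)) / 2 ^ n.

Definition gUH (n m : nat) (C : bits n -> bits m) (alpha : R) : R :=
  (\big[Rplus/0]_(y : bits m) (if Rleb (alpha / 2 ^ m) (DC C y) then 1 else 0)) / 2 ^ m.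

Definition gUY (m l : nat) (V : bits m -> bits l -> bool) : R :=
  (\big[Rplus/0]_(y : bits m) (if inV V y then 1 else 0)) / 2 ^ m.

(* g_YL = Pr_{y <- D^C}[D^C(y) < alpha 2^-m /\ y ∈ V] *)
Definition gYL (n m l : nat) (C : bits n -> bits m) (V : bits m -> bits l -> bool) (alpha : R) : R :=
  (\big[Rplus/0]_(r : bits n)
     (if Rltb (DC C (C r)) (alpha / 2 ^ m) && inV V (C r) then 1 else 0)) / 2 ^ n.

Definition inM (n m : nat) (C : bits n -> bits m) (eps alpha : R) (y : bits m) : bool :=
  Rleb ((1 - 4 * eps) * (alpha / 2 ^ m)) (DC C y) &&
  Rleb (DC C y) ((1 + 4 * eps) * (alpha / 2 ^ m)).

From Stdlib Require Import Reals.
From mathcomp Require Import all_boot.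
From HB Require Import structures.
From Stdlib Require Import Lra.
Local Open Scope R_scope.

(* Write t = alpha 2^-m and call an exponent o "low" (o in L) when
   2^-(o+1)eps < t; the L-mass of o is 2^m 2^-(o eps) if o is low and 0
   otherwise.  Everything is compared index by index with the reference
   exponent u'(i), whose L-mass statistics are controlled by (7) and (8).
   Since D^C(y_i) lies in the bin of u'(i) and, by (3), just above the bin
   of u(i), the two exponents are nearly equal:
   - the L-mass of u(i) is at most (1 + 3 eps) times that of u'(i), up to
     an error 2 alpha when u(i) is low but u'(i) is not;
   - if u(i) is high but u'(i) is low, then D^C(y_i) lies in the band M.
   Combining these facts gives two pointwise inequalities sandwiching the
   L-mass of u(i) on Y between expressions in the reference quantities
   and in the indicators of Y, Y', H, H', M.  Averaging over i (averages are
   linear and monotone) and inserting the hypotheses (a)-(d), (4)-(8)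
   yields the claimed interval of radius 112 sqrt(eps) alpha. *)

Lemma RplusA : associative Rplus.
Proof. by move=> x y z; rewrite Rplus_assoc. Qed.

HB.instance Definition _ :=
  Monoid.isComLaw.Build R 0 Rplus RplusA Rplus_comm Rplus_0_l.

Definition indR (b : bool) : R := if b then 1 else 0.

Lemma card_sum (T : finType) (A : {pred T}) :
  INR #|A| = \big[Rplus/0]_(i : T) indR (i \in A).
Proof.
rewrite -sum1_card (big_morph INR plus_INR (erefl _)) big_mkcond /=.
by apply: eq_bigr => i _; rewrite /indR; case: (i \in A).
Qed.

Lemma RltbP (x y : R) : reflect (x < y) (Rltb x y).
Proof. by rewrite /Rltb; case: Rlt_dec => h; constructor. Qed.

Lemma RlebP (x y : R) : reflect (x <= y) (Rleb x y).
Proof. by rewrite /Rleb; case: Rle_dec => h; constructor. Qed.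

Definition avg {I : finType} (K : R) (F : I -> R) : R :=
  (\big[Rplus/0]_(i : I) F i) / K.

Section Averages.
Variables (I : finType) (K : R).

Lemma avgD (F G : I -> R) : avg K (fun i => F i + G i) = avg K F + avg K G.
Proof. by rewrite /avg big_split /=; rewrite /Rdiv Rmult_plus_distr_r. Qed.

Lemma avgZ (c : R) (F : I -> R) : avg K (fun i => c * F i) = c * avg K F.
Proof.
rewrite /avg; have -> : \big[Rplus/0]_(i : I) (c * F i) =
  c * \big[Rplus/0]_(i : I) F i.
  apply: (big_rec2 (fun x y => x = c * y)); first by ring.
  by move=> i y1 y2 _ ->; ring.
by rewrite /Rdiv Rmult_assoc.
Qed.

Lemma avgB (F G : I -> R) : avg K (fun i => F i - G i) = avg K F - avg K G.
Proof.
have -> : avg K (fun i => F i - G i) = avg K (fun i => F i + (-1) * G i).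
  by rewrite /avg; congr (_ / _); apply: eq_bigr => i _; ring.
by rewrite avgD avgZ; ring.
Qed.

Lemma avg_le (F G : I -> R) :
  0 < K -> (forall i, F i <= G i) -> avg K F <= avg K G.
Proof.
move=> hK hFG; apply: Rmult_le_compat_r; first by left; apply: Rinv_0_lt_compat.
apply: (big_rec2 (fun x y => x <= y)); first lra.
by move=> i y1 y2 _ h; have := hFG i; lra.
Qed.

End Averages.

Arguments avg_le {I K F G}.

(* 2^eps is close to 1 for small eps: 1 <= 2^eps <= 1 + 2 eps when
   0 <= eps <= 1/4 (via ln 2 <= 1 and exp x <= 1/(1 - x)). *)
Lemma Rpower2_ge1 {e : R} : 0 <= e -> 1 <= Rpower 2 e.
Proof.
move=> he; rewrite -(Rpower_O 2); last lra.
by apply: Rle_Rpower; lra.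
Qed.

Lemma Rpower2_le {e : R} : 0 <= e <= 1/4 -> Rpower 2 e <= 1 + 2 * e.
Proof.
move=> he.
have ln2_le1 : ln 2 <= 1.
  have : ln 2 < ln (exp 1) by apply: ln_increasing; [lra | have := exp_ineq1 1; lra].
  by rewrite ln_exp; lra.
have ln2_pos : 0 < ln 2 by have := ln_lt_2; lra.
rewrite /Rpower; set x := e * ln 2.
have hx : 0 <= x <= e by rewrite /x; split; nra.
have exp_neg := exp_ineq1_le (- x).
have exp_inv : exp x * exp (- x) = 1 by rewrite -exp_plus Rplus_opp_r exp_0.
have := exp_pos x; nra.
Qed.

Lemma ex2_shift (e : R) (o : option nat) :
  ex2 e o 0 = Rpower 2 e * ex2 e o 1.
Proof.
case: o => [j|] /=; last by ring.
rewrite -Rpower_plus; congr Rpower.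
by rewrite addn0 addn1 S_INR; ring.
Qed.

Lemma ex2_ge0 (e : R) (o : option nat) (s : nat) : 0 <= ex2 e o s.
Proof. by case: o => [j|] /=; [left; apply: exp_pos | lra]. Qed.

Lemma ex2_shift_bounds {e : R} (o : option nat) : 0 <= e <= 1/4 ->
  ex2 e o 1 <= ex2 e o 0 <= (1 + 2 * e) * ex2 e o 1.
Proof.
move=> he; rewrite ex2_shift.
have := Rpower2_ge1 (proj1 he); have := Rpower2_le he; have := ex2_ge0 e o 1.
split; nra.
Qed.

Lemma uprime_bin {n m : nat} (C : bits n -> bits m) (e : R) (y : bits m) :
  uprime C e y = None \/ DC C y <= ex2 e (uprime C e y) 0.
Proof.
rewrite /uprime; case E: [seq _ <- _ | _] => [|j s]; [by left | right].
have : j \in [seq j <- iota 0 (tpar n e).+1 | inBin C e j y] by rewrite E inE eqxx.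
rewrite mem_filter => /andP[/andP[_ /RlebP]]; by rewrite /= addn0.
Qed.

Definition low (eps alpha M2 : R) (o : option nat) : bool :=
  Rltb (ex2 eps o 1) (alpha / M2).

Definition lowmass (eps alpha M2 : R) (o : option nat) : R :=
  if low eps alpha M2 o then M2 * ex2 eps o 0 else 0.

Definition lowmass_on (eps alpha M2 : R) (b : bool) (o : option nat) : R :=
  if low eps alpha M2 o && b then M2 * ex2 eps o 0 else 0.

Definition band (eps alpha M2 x : R) : bool :=
  Rleb ((1 - 4 * eps) * (alpha / M2)) x && Rleb x ((1 + 4 * eps) * (alpha / M2)).

Section PointwiseComparison.
Variables (eps alpha M2 : R).
Hypotheses (heps : 0 <= eps <= 1/4) (halpha : 0 < alpha) (hM2 : 0 < M2).

Local Notation t := (alpha / M2).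
Local Notation low := (low eps alpha M2).
Local Notation lowmass := (lowmass eps alpha M2).
Local Notation lowmass_on := (lowmass_on eps alpha M2).
Local Notation band := (band eps alpha M2).

Lemma threshold_pos : 0 < t.
Proof. by apply: Rdiv_lt_0_compat. Qed.

Lemma lowmass_bounds (o : option nat) : 0 <= lowmass o <= 2 * alpha.
Proof.
rewrite /lowmass /low; case: RltbP => [hlow|_]; last lra.
have [_ hshift] := ex2_shift_bounds o heps.
have h0 := ex2_ge0 eps o 0.
have hle : ex2 eps o 0 <= 2 * t by have := ex2_ge0 eps o 1; nra.
have -> : 2 * alpha = M2 * (2 * t) by field; lra.
split; first exact: Rmult_le_pos (Rlt_le _ _ hM2) h0.
exact: Rmult_le_compat_l (Rlt_le _ _ hM2) hle.
Qed.

Lemma lowmass_onE (b : bool) (o : option nat) :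
  lowmass_on b o = if b then lowmass o else 0.
Proof. by rewrite /lowmass_on /lowmass; case: (low o); case: b. Qed.

(* Now fix the data of one index: the exponent uo = u(i), the reference
   exponent up = u'(i) and the probability D = D^C(y_i), related by
   hypotheses (2), (3) and the bin property of u'. *)
Variables (uo up : option nat) (D : R).
Hypotheses (hfin : up = None -> uo = None)
  (hlow : uo = None \/ D > (1 - eps / 2) * ex2 eps uo 1)
  (hup : up = None \/ D <= ex2 eps up 0).

(* The weight of u(i) is at most (1 + 3 eps) times that of u'(i):
   2^-(uo eps) <= (1 + 2 eps) 2^-(uo+1)eps <= (1 + 3 eps)(1 - eps/2) 2^-(uo+1)eps
   < (1 + 3 eps) D <= (1 + 3 eps) 2^-(up eps). *)
Lemma weight_transfer : ex2 eps uo 0 <= (1 + 3 * eps) * ex2 eps up 0.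
Proof.
have hup0 := ex2_ge0 eps up 0.
case: hlow => [-> /= | hD]; first nra.
case: hup => [hN | hDu]; first by rewrite (hfin hN) /=; nra.
have [_ hshift] := ex2_shift_bounds uo heps.
have hcoef : 1 + 2 * eps <= (1 + 3 * eps) * (1 - eps / 2) by nra.
have shift_step : (1 + 2 * eps) * ex2 eps uo 1 <= (1 + 3 * eps) * (1 - eps / 2) * ex2 eps uo 1.
  by apply: Rmult_le_compat_r; [exact: ex2_ge0 | lra].
have density_step : (1 + 3 * eps) * ((1 - eps / 2) * ex2 eps uo 1) <= (1 + 3 * eps) * D.
  by apply: Rmult_le_compat_l; lra.
have bin_step : (1 + 3 * eps) * D <= (1 + 3 * eps) * ex2 eps up 0.
  by apply: Rmult_le_compat_l; lra.
nra.
Qed.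

Lemma lowmass_transfer :
  lowmass uo <= (1 + 3 * eps) * lowmass up + 2 * alpha * indR (low uo && ~~ low up).
Proof.
have [b0 _] := lowmass_bounds up; have [_ a2] := lowmass_bounds uo.
rewrite /indR; case: (boolP (low uo)) => hLo /=; last first.
  have -> : lowmass uo = 0 by rewrite /lowmass (negbTE hLo).
  nra.
case: (boolP (low up)) => hLp /=; last nra.
rewrite /lowmass hLo hLp.
have := Rmult_le_compat_l M2 _ _ (Rlt_le _ _ hM2) weight_transfer; lra.
Qed.

(* If u(i) is high but u'(i) is low, then D lies in the band M:
   (1 - 4 eps) t <= (1 - eps/2) 2^-(uo+1)eps < D <= (1 + 2 eps) 2^-(up+1)eps
   < (1 + 4 eps) t. *)
Lemma high_low_band : ~~ low uo -> low up -> band D.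
Proof.
have ht := threshold_pos.
move=> /RltbP /Rnot_lt_le hHo /RltbP hLp.
case: hlow => [huo | hD]; first by rewrite huo /= in hHo; lra.
case: hup => [hN | hDu]; first by rewrite (hfin hN) /= in hHo; lra.
have [_ hshift] := ex2_shift_bounds up heps.
apply/andP; split; apply/RlebP; nra.
Qed.

(* Indicator form of the comparison of classifications: being low for u and
   high for u' costs at most [H'] - [H] + [M], and the latter is never
   negative because of [high_low_band]. *)
Lemma disagreement_le :
  indR (low uo && ~~ low up) <= indR (~~ low up) - indR (~~ low uo) + indR (band D).
Proof.
move: high_low_band; rewrite /indR.
case: (low uo); case: (low up); case: (band D) => //= hband; try lra.
by have := hband isT isT.
Qed.

(* Write E for the right-hand side of
   [disagreement_le]; Yb, Vb stand for i in Y and y_i in V, and (b) gives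
   Yb -> Vb.  The L-mass of u(i) on Y is bounded above and below by the
   L-mass of u'(i) on V, corrected by 3 eps times the L-mass of u'(i),
   2 alpha E, and (from below) 2 alpha times the Y'/Y discrepancy. *)
Lemma lowmass_on_upper (Yb Vb : bool) : (Yb -> Vb) ->
  lowmass_on Yb uo <= lowmass_on Vb up + 3 * eps * lowmass up
    + 2 * alpha * (indR (~~ low up) - indR (~~ low uo) + indR (band D)).
Proof.
move=> hYV; rewrite !lowmass_onE.
have := lowmass_transfer; have := disagreement_le.
have [b0 _] := lowmass_bounds up.
have gap0 : 0 <= indR (low uo && ~~ low up) by rewrite /indR; case: (_ && _); lra.
case: Yb hYV => [/(_ isT) -> | _]; last case: Vb; nra.
Qed.

Lemma lowmass_on_lower (Yb Vb : bool) : (Yb -> Vb) ->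
  lowmass uo - lowmass up + lowmass_on Vb up - 2 * alpha * (indR Vb - indR Yb)
    - 3 * eps * lowmass up
    - 2 * alpha * (indR (~~ low up) - indR (~~ low uo) + indR (band D))
  <= lowmass_on Yb uo.
Proof.
move=> hYV; rewrite !lowmass_onE.
have := lowmass_transfer; have := disagreement_le.
have [b0 _] := lowmass_bounds up; have [_ a2] := lowmass_bounds uo.
have gap0 : 0 <= indR (low uo && ~~ low up) by rewrite /indR; case: (_ && _); lra.
case: Yb hYV => [/(_ isT) -> | _]; last case: Vb; rewrite /=; nra.
Qed.

End PointwiseComparison.

Arguments lowmass_on_upper {eps alpha M2} heps halpha hM2 {uo up D} hfin hlow hup {Yb Vb}.
Arguments lowmass_on_lower {eps alpha M2} heps halpha hM2 {uo up D} hfin hlow hup {Yb Vb}.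

(* The averaged estimate, over an arbitrary finite index set I with
   normalisation K > 0.  Here uo, up, D play the roles of u, u' and
   i |-> D^C(y_i), and memY, memV of the membership tests i in Y, y_i in V. *)
Section AveragedEstimate.
Variables (I : finType) (K eps alpha M2 gH gUH gUY gYL pH pUH : R).
Variables (uo up : I -> option nat) (D : I -> R) (memY memV : pred I).
Hypotheses (hK : 0 < K) (heps : 0 < eps <= 1/25) (halpha : 1 < alpha) (hM2 : 0 < M2).
Hypotheses (hYV : forall i, memY i -> memV i)
  (hfin : forall i, up i = None -> uo i = None)
  (hlow : forall i, uo i = None \/ D i > (1 - eps / 2) * ex2 eps (uo i) 1)
  (hup : forall i, up i = None \/ D i <= ex2 eps (up i) 0).

Local Notation low := (low eps alpha M2).
Local Notation lowmass := (lowmass eps alpha M2).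
Local Notation lowmass_on := (lowmass_on eps alpha M2).
Local Notation band := (band eps alpha M2).

Local Notation qT := (avg K (fun i => lowmass_on (memY i) (uo i))).
Local Notation qA := (avg K (fun i => lowmass (uo i))).
Local Notation qB := (avg K (fun i => lowmass (up i))).
Local Notation qBV := (avg K (fun i => lowmass_on (memV i) (up i))).
Local Notation qY := (avg K (fun i => indR (memY i))).
Local Notation qV := (avg K (fun i => indR (memV i))).
Local Notation qH := (avg K (fun i => indR (~~ low (uo i)))).
Local Notation qH' := (avg K (fun i => indR (~~ low (up i)))).
Local Notation qM := (avg K (fun i => indR (band (D i)))).

Let heps' : 0 <= eps <= 1/4. Proof. lra. Qed.
Let halpha' : 0 < alpha. Proof. lra. Qed.

Lemma avg_upper : qT <= qBV + 3 * eps * qB + 2 * alpha * (qH' - qH + qM).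
Proof.
have := avg_le hK (fun i =>
  lowmass_on_upper heps' halpha' hM2 (hfin i) (hlow i) (hup i) (hYV i)).
by rewrite avgD avgD !avgZ avgD avgB.
Qed.

Lemma avg_lower :
  qA - qB + qBV - 2 * alpha * (qV - qY) - 3 * eps * qB
    - 2 * alpha * (qH' - qH + qM) <= qT.
Proof.
have := avg_le hK (fun i =>
  lowmass_on_lower heps' halpha' hM2 (hfin i) (hlow i) (hup i) (hYV i)).
by rewrite avgB avgB avgB avgD avgB !avgZ avgB avgD avgB.
Qed.

(* The statistical hypotheses: (a), (c), (d), (4)-(8), together with the
   accuracy of the estimates pH, pUH of gH, gUH. *)
Hypotheses (hpH0 : 0 <= pH) (hpH : in_pm pH gH (4 / 5 * sqrt eps))
  (hpUH : in_pm pUH gUH (10 * sqrt eps)).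
Hypotheses (hY : in_pm qY gUY eps) (hH : in_pm qH pUH (3 * sqrt eps))
  (hA : in_pm qA (1 - pH) (5 * sqrt eps)) (hM : qM < 3 * sqrt eps / alpha)
  (hV : in_pm qV gUY eps) (hH' : in_pm qH' gUH (3 * sqrt eps))
  (hB : in_pm qB (1 - gH) (5 * sqrt eps)) (hBV : in_pm qBV gYL (5 * sqrt eps)).

(* Each error term of the sandwich is O(sqrt eps alpha); adding them up
   (with eps <= sqrt eps / 5 and sqrt eps <= sqrt eps alpha) gives 112. *)
Lemma avg_lowmass_on_estimate : in_pm qT gYL (112 * sqrt eps * alpha).
Proof.
have hU := avg_upper; have hL := avg_lower.
have hs0 := sqrt_pos eps.
have hss : sqrt eps * sqrt eps = eps by apply: sqrt_sqrt; lra.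
move: (hpH) (hpUH) (hY) (hH) (hA) (hM) (hV) (hH') (hB) (hBV) hs0 hss.
rewrite /in_pm; set s := sqrt eps.
move=> [? ?] [? ?] [? ?] [? ?] [? ?] ? [? ?] [? ?] [? ?] [? ?] hs0 hss.
have hs : s <= 1 / 5 by nra.
have eps_s : eps <= s / 5 by nra.
have qB_le : qB <= 11 / 5 by lra.
have hHgap : alpha * (qH' - qH) <= alpha * (16 * s) by apply: Rmult_le_compat_l; lra.
have hVgap : alpha * (qV - qY) <= alpha * (2 * eps) by apply: Rmult_le_compat_l; lra.
have hMgap : alpha * qM <= 3 * s.
  have -> : 3 * s = alpha * (3 * s / alpha) by field; lra.
  by apply: Rmult_le_compat_l; lra.
have eps_qB : eps * qB <= eps * (11 / 5) by apply: Rmult_le_compat_l; lra.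
have s_alpha : s <= alpha * s by nra.
have alpha_eps : alpha * eps <= alpha * (s / 5) by apply: Rmult_le_compat_l; lra.
split; lra.
Qed.

End AveragedEstimate.

Arguments avg_lowmass_on_estimate {I K eps alpha M2 gH gUH gUY gYL pH pUH}.

(* The theorem: instantiate the averaged estimate with I = [k], K = k,
   M2 = 2^m, uo = u, up = u' o y, D = D^C o y; sums over filtered index
   sets and cardinalities are first rewritten as averages of indicators. *)
Theorem mainTheorem9
  (n m k l : nat) (C : bits n -> bits m) (V : bits m -> bits l -> bool)
  (eps alpha pH pUH : R)
  (ys : 'I_k -> bits m) (u : 'I_k -> option nat) (Y : {set 'I_k}) (w : 'I_k -> bits l)
  (hn : (1 <= n)%N) (hm : (1 <= m)%N) (hk : (1 <= k)%N)
  (heps : 0 < eps <= 1 / 25) (halpha : 1 < alpha)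
  (hpH01 : 0 <= pH <= 1) (hpUH01 : 0 <= pUH <= 1)
  (hpH : in_pm pH (gH C alpha) (4 / 5 * sqrt eps))
  (hpUH : in_pm pUH (gUH C alpha) (10 * sqrt eps))
  (* L = {i : 2^{-(u(i)+1)eps} < alpha 2^-m}, H = [k] \ L *)
  (ha : in_pm (INR #|Y| / INR k) (gUY V) eps)
  (hb : forall i, i \in Y -> V (ys i) (w i) = true)
  (hc : in_pm (INR #|[pred i : 'I_k | ~~ Rltb (ex2 eps (u i) 1) (alpha / 2 ^ m)]| / INR k)
          pUH (3 * sqrt eps))
  (hd : in_pm ((\big[Rplus/0]_(i : 'I_k | Rltb (ex2 eps (u i) 1) (alpha / 2 ^ m))
                  (2 ^ m * ex2 eps (u i) 0)) / INR k)
          (1 - pH) (5 * sqrt eps))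
  (h1 : (\big[Rplus/0]_(r : bits n) (if inM C eps alpha (C r) then 1 else 0)) / 2 ^ n <= sqrt eps)
  (h2 : forall i, uprime C eps (ys i) = None -> u i = None)
  (h3 : forall i, u i = None \/ DC C (ys i) > (1 - eps / 2) * ex2 eps (u i) 1)
  (h4 : INR #|[pred i : 'I_k | inM C eps alpha (ys i)]| / INR k < 3 * sqrt eps / alpha)
  (h5 : in_pm (INR #|[pred i : 'I_k | inV V (ys i)]| / INR k) (gUY V) eps)
  (h6 : in_pm (INR #|[pred i : 'I_k |
                 ~~ Rltb (ex2 eps (uprime C eps (ys i)) 1) (alpha / 2 ^ m)]| / INR k)
          (gUH C alpha) (3 * sqrt eps))
  (h7 : in_pm ((\big[Rplus/0]_(i : 'I_k | Rltb (ex2 eps (uprime C eps (ys i)) 1) (alpha / 2 ^ m))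
                  (2 ^ m * ex2 eps (uprime C eps (ys i)) 0)) / INR k)
          (1 - gH C alpha) (5 * sqrt eps))
  (h8 : in_pm ((\big[Rplus/0]_(i : 'I_k | Rltb (ex2 eps (uprime C eps (ys i)) 1) (alpha / 2 ^ m)
                                   && inV V (ys i))
                  (2 ^ m * ex2 eps (uprime C eps (ys i)) 0)) / INR k)
          (gYL C V alpha) (5 * sqrt eps)) :
  in_pm ((\big[Rplus/0]_(i : 'I_k | Rltb (ex2 eps (u i) 1) (alpha / 2 ^ m) && (i \in Y))
            (2 ^ m * ex2 eps (u i) 0)) / INR k)
        (gYL C V alpha) (112 * sqrt eps * alpha).
Proof.
have hK : 0 < INR k by apply: lt_0_INR; apply/ltP.
have hM2 : 0 < 2 ^ m by apply: pow_lt; lra.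
have hYV i : i \in Y -> inV V (ys i) by move/hb => hv; apply/existsP; exists (w i).
move: ha hc h4 h5 h6; rewrite !card_sum => ha hc h4 h5 h6.
rewrite big_mkcond in hd; rewrite big_mkcond in h7; rewrite big_mkcond in h8.
rewrite big_mkcond.
exact: (avg_lowmass_on_estimate u (fun i => uprime C eps (ys i))
  (fun i => DC C (ys i)) (fun i => i \in Y) (fun i => inV V (ys i))
  hK heps halpha hM2 hYV h2 h3 (fun i => uprime_bin C eps (ys i))
  (proj1 hpH01) hpH hpUH ha hc hd h4 h5 h6 h7 h8).
Qed.
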